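(* Fix a student with strict utilities $u$ over $C$ and a ROL $R$ such that, for every state $\omega$ with $B(\omega)\neq\emptyset$, the assigned school $\alpha_R(\omega)$ is defined and equals the $u$-best school in $B(\omega)$. Assume the feasible sets $B(\omega)$ do not depend on the student's own ROL. Then: (i) For any ROL $R'$, $\alpha_{R'}(\omega)$ is the $u$-best school in $B(\omega)$ for every state $\omega$ with $B(\omega)\ne\emptyset$ if and only if $R'\in\mathcal R^*(R)$. (ii) $\mathcal P^{all}(R')=\mathcal P^{all}(R)$ for every $R'\in\mathcal R^*(R)$. (iii) For any strict utility vector $u'$ on $C$ and any ROL $R''$ such that $\alpha_{R''}(\omega)$ is the $u'$-best school of $B(\omega)$ for every $\omega$ with $B(\omega)\ne\emptyset$, we have $\mathcal P^{all}(R'')=\mathcal P^{all}(R)$ if and only if $u'\in\mathcal U^*(R)$.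
   Context: Setting: finite set of schools $C$ (no outside option). $(\Omega,\Pr)$ is a probability space of states; each state determines the student's feasible set $B(\omega)\subseteq C$, taking finitely many values. A ROL is an ordered list of distinct schools of $C$. For a ROL $R$, the assigned school $\alpha_R(\omega)$ is the highest-ranked school of $R$ in $B(\omega)$ (undefined if none). $\tilde{\mathcal P}(R)=\{(\alpha_R(\omega),c):\omega\in\Omega,\ \alpha_R(\omega)\text{ defined},\ c\in B(\omega)\setminus\{\alpha_R(\omega)\}\}$ ($(x,y)$ meaning ''$x$ inferred preferred to $y$''), and $\mathcal P^{all}(R)$ is the transitive closure of $\tilde{\mathcal P}(R)$. $\mathcal R^*(R)$ is the set of ROLs $R'$ such that (1) every ever-assigned school $\alpha_R(\omega)$ (over all $\omega$) is listed in $R'$, and (2) there are no schools $c,c'$ with $c'$ listed above $c$ in $R'$ and $(c,c')\in\mathcal P^{all}(R)$. For a strict utility vector $u'$, $\rho(u')$ is the ROL listing all schools of $C$ in decreasing order of $u'$; $\mathcal U^*(R)$ is the set of strict utility vectors $u'$ with $\rho(u')\in\mathcal R^*(R)$. *)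

From HB Require Import structures.
From mathcomp Require Import all_boot all_order all_algebra.
From Stdlib Require Import Relations.
Set Implicit Arguments. Unset Strict Implicit. Unset Printing Implicit Defensive.
Import Order.TTheory GRing.Theory Num.Theory.
Local Open Scope ring_scope.

Section SchoolChoice.
Variables (C : finType) (Omega : Type) (B : Omega -> {set C}).

Definition is_ROL (R : seq C) : bool := uniq R.

(* Assigned school: highest-ranked school of R lying in B w (None = undefined). *)
Definition alpha (R : seq C) (w : Omega) : option C :=
  ohead [seq c <- R | c \in B w].

Definition best (U : realDomainType) (u : C -> U) (S : {set C}) (c : C) : Prop :=
  c \in S /\ forall c', c' \in S -> c' != c -> u c' < u c.

Definition strict_util (U : realDomainType) (u : C -> U) : Prop := injective u.

Definition Ptilde (R : seq C) (x y : C) : Prop :=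
  exists w, alpha R w = Some x /\ y \in B w /\ y != x.

Definition Pall (R : seq C) : relation C := clos_trans C (Ptilde R).

Definition Rstar (R R' : seq C) : Prop :=
  [/\ is_ROL R',
      (forall w c, alpha R w = Some c -> c \in R') &
      ~ (exists c c', [/\ c \in R', c' \in R', (index c' R' < index c R')%N
                        & Pall R c c'])].

Definition rho (U : realDomainType) (u : C -> U) : seq C :=
  sort (fun x y => u y <= u x) (enum C).

Definition Ustar (U : realDomainType) (R : seq C) (u : C -> U) : Prop :=
  strict_util u /\ Rstar R (rho u).

Definition assigns_best (U : realDomainType) (u : C -> U) (R : seq C) : Prop :=
  forall w, B w != set0 -> exists c, alpha R w = Some c /\ best u (B w) c.

End SchoolChoice.

(* Since the best school of a set under a strict
   utility is unique, any two ROLs that both assign the u-best school in every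
   state have the same assignment function, and the inferred preference
   relation Pall only depends on the assignment function; this gives (ii) and
   the backward half of (iii).  For a ROL R assigning u-best schools, each
   inferred pair (x, y) in Pall R satisfies u y < u x, and a ROL assigning the
   same u-best schools ranks x above y; this gives the forward half of (i).
   Conversely, a ROL R' in R*(R) lists every assigned school and inverts no
   inferred pair, so its first feasible school is the assigned one, which is
   the other half of (i).  Finally rho u' lists all schools by decreasing u',
   so it assigns u'-best schools and lies in R*(R) as soon as u' decreases
   along Pall R; this gives the forward half of (iii). *)
From mathcomp Require Import all_boot all_order all_algebra.
From Stdlib Require Import Relations.
Import Order.TTheory GRing.Theory Num.Theory.
Local Open Scope ring_scope.
Set Implicit Arguments. Unset Strict Implicit.

Lemma index_ltn (T : eqType) (s : seq T) (x y : T) :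
  x \in s -> y \in s -> x != y ->
  (index x s <= index y s)%N -> (index x s < index y s)%N.
Proof.
move=> xs ys xy le_xy; rewrite ltn_neqAle le_xy andbT.
by apply: contra_neq xy => /(index_inj x xs ys).
Qed.

Section Assignment.
Variables (C : finType) (Omega : Type) (B : Omega -> {set C}).

Lemma alpha_SomeP (R : seq C) w c : alpha B R w = Some c ->
  [/\ c \in R, c \in B w &
      forall d, d \in R -> d \in B w -> (index c R <= index d R)%N].
Proof.
rewrite /alpha; elim: R => //= x R IH; case: ifP => xB /=.
  by case=> <-; split; rewrite ?mem_head // => d _ _; rewrite eqxx.
move/IH=> [cR cB c_first]; split; rewrite ?inE ?cR ?orbT //.
have [xc | xc] := eqVneq x c; first by rewrite xc cB in xB.
move=> d; rewrite inE => /orP[/eqP -> | dR dB]; first by rewrite xB.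
have [xd | _] := eqVneq x d; first by rewrite xd dB in xB.
by rewrite ltnS c_first.
Qed.

Lemma alpha_NoneP (R : seq C) w :
  alpha B R w = None -> forall d, d \in R -> d \notin B w.
Proof.
rewrite /alpha; elim: R => //= x R IH; case: ifP => //= xB /IH notB d.
by rewrite inE => /orP[/eqP -> | /notB]; rewrite ?xB.
Qed.

Lemma alpha_feasible (R : seq C) w c : alpha B R w = Some c -> B w != set0.
Proof. by case/alpha_SomeP=> _ cB _; apply/set0Pn; exists c. Qed.

Lemma Pall_sub (R R' : seq C) : (forall w, alpha B R w = alpha B R' w) ->
  forall x y, Pall B R x y -> Pall B R' x y.
Proof.
move=> same x y; elim=> [a b [w [aw [bB ba]]] | a b c _ Pab _ Pbc].
  by apply: t_step; exists w; rewrite -same.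
exact: t_trans Pab Pbc.
Qed.

Lemma Pall_congr (R R' : seq C) : (forall w, alpha B R w = alpha B R' w) ->
  forall x y, Pall B R x y <-> Pall B R' x y.
Proof. by move=> same x y; split; apply: Pall_sub => w; rewrite same. Qed.

Section Utility.
Variables (U : realDomainType) (u : C -> U).

Lemma best_unique (S : {set C}) c d : best u S c -> best u S d -> c = d.
Proof.
move=> [cS c_best] [dS d_best]; have [// | cd] := eqVneq c d.
have := lt_trans (d_best c cS cd) (c_best d dS (contra_neq esym cd)).
by rewrite ltxx.
Qed.

Lemma assigns_best_alpha (R R' : seq C) :
  assigns_best B u R -> assigns_best B u R' ->
  forall w, alpha B R w = alpha B R' w.
Proof.
have agree S S' (H : assigns_best B u S) (H' : assigns_best B u S') w c :
    alpha B S w = Some c -> alpha B S' w = Some c.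
  move=> Sw; have [c1 [Sw1 best1]] := H w (alpha_feasible Sw).
  have [c2 [S'w best2]] := H' w (alpha_feasible Sw).
  by move: Sw; rewrite Sw1 S'w (best_unique best1 best2).
move=> HR HR' w; case Rw: (alpha B R w) => [c|].
  by rewrite (agree R R' HR HR' w c Rw).
by case R'w: (alpha B R' w) => [c|] //; rewrite (agree R' R HR' HR w c R'w) in Rw.
Qed.

Lemma Pall_decreasing (R : seq C) : assigns_best B u R ->
  forall x y, Pall B R x y -> u y < u x.
Proof.
move=> HR x y; elim=> [a b [w [aw [bB ba]]] | a b c _ ltab _ ltbc].
  have [c [Rw [_ c_best]]] := HR w (alpha_feasible aw).
  by move: aw ba; rewrite Rw => -[<-] bc; apply: c_best.
exact: lt_trans ltbc ltab.
Qed.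

Lemma Pall_ranked (R R' : seq C) :
  assigns_best B u R -> assigns_best B u R' -> forall x y, Pall B R x y ->
  x \in R' /\ (y \in R' -> (index x R' < index y R')%N).
Proof.
move=> HR HR' x y; elim=> [a b [w [aw [bB ba]]] | a b c _ [aR' ab] _ [bR' bc]].
  rewrite (assigns_best_alpha HR HR') in aw.
  have [aR' _ a_first] := alpha_SomeP aw; split=> // bR'.
  by rewrite index_ltn // ?a_first // eq_sym.
by split=> // cR'; apply: ltn_trans (ab bR') (bc cR').
Qed.

Lemma assigns_best_Rstar (R R' : seq C) : is_ROL R' ->
  assigns_best B u R -> assigns_best B u R' -> Rstar B R R'.
Proof.
move=> uR' HR HR'; split=> // [w c | [c [c' [cR' c'R' lt_c'c Pcc']]]].
  by rewrite (assigns_best_alpha HR HR') => /alpha_SomeP[].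
have [_ lt_cc'] := Pall_ranked HR HR' Pcc'.
by have := ltn_trans lt_c'c (lt_cc' c'R'); rewrite ltnn.
Qed.

Lemma Rstar_assigns_best (R R' : seq C) :
  assigns_best B u R -> Rstar B R R' -> assigns_best B u R'.
Proof.
move=> HR [_ assigned_in no_inversion] w ne.
have [c [Rw [cB c_best]]] := HR w ne; have cR' := assigned_in w c Rw.
case R'w: (alpha B R' w) => [d|]; last by have := alpha_NoneP R'w cR'; rewrite cB.
exists d; split=> //; have [dR' dB d_first] := alpha_SomeP R'w.
have [-> // | dc] := eqVneq d c; exfalso; apply: no_inversion.
exists c, d; split=> //; first by rewrite index_ltn ?d_first.
by apply: t_step; exists w.
Qed.

End Utility.

Lemma rho_mem (U : realDomainType) (u' : C -> U) x : x \in rho u'.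
Proof. by rewrite /rho mem_sort mem_enum. Qed.

Lemma rho_uniq (U : realDomainType) (u' : C -> U) : is_ROL (rho u').
Proof. by rewrite /is_ROL /rho sort_uniq enum_uniq. Qed.

Lemma rho_index_le (U : realDomainType) (u' : C -> U) x y :
  (index x (rho u') < index y (rho u'))%N -> u' y <= u' x.
Proof.
apply: (sorted_ltn_index (leT := fun a b => u' b <= u' a)); rewrite ?rho_mem //.
  by move=> a b c ba cb; apply: le_trans cb ba.
by apply: sort_sorted => a b; apply: le_total.
Qed.

Lemma rho_assigns_best (U : realDomainType) (u' : C -> U) :
  strict_util u' -> assigns_best B u' (rho u').
Proof.
move=> inj_u' w /set0Pn [x xB].
case Rw: (alpha B (rho u') w) => [c|]; last first.
  by have := alpha_NoneP Rw (rho_mem u' x); rewrite xB.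
exists c; split=> //; have [_ cB c_first] := alpha_SomeP Rw; split=> // d dB dc.
rewrite lt_neqAle (contra_neq (@inj_u' d c)) //= rho_index_le //.
by rewrite index_ltn ?rho_mem ?c_first ?rho_mem // eq_sym.
Qed.

Lemma rho_Rstar (U : realDomainType) (u' : C -> U) (R : seq C) :
  (forall x y, Pall B R x y -> u' y < u' x) -> Rstar B R (rho u').
Proof.
move=> decr; split; [exact: rho_uniq | by move=> *; apply: rho_mem |].
move=> [c [c' [_ _ lt_c'c Pcc']]].
by have := lt_le_trans (decr c c' Pcc') (rho_index_le lt_c'c); rewrite ltxx.
Qed.

End Assignment.

Theorem propositionB1 (C : finType) (Omega : Type) (B : Omega -> {set C})
    (U : realDomainType) (u : C -> U) (R : seq C) :
  strict_util u -> is_ROL R -> assigns_best B u R ->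
  (* (i) *)
  (forall R' : seq C, is_ROL R' -> (assigns_best B u R' <-> Rstar B R R')) /\
  (* (ii) *)
  (forall R' : seq C, Rstar B R R' ->
     forall x y, Pall B R' x y <-> Pall B R x y) /\
  (* (iii) *)
  (forall (u' : C -> U) (R'' : seq C), strict_util u' -> is_ROL R'' ->
     assigns_best B u' R'' ->
     ((forall x y, Pall B R'' x y <-> Pall B R x y) <-> Ustar B R u')).
Proof.
move=> _ _ HR; split; [|split].
- move=> R' uR'; split; [exact: assigns_best_Rstar | exact: Rstar_assigns_best].
- move=> R' HS; apply: Pall_congr.
  exact: assigns_best_alpha (Rstar_assigns_best HR HS) HR.
- move=> u' R'' su' _ HR''; split=> [same_P | [_ HS]].
    split=> //; apply: rho_Rstar => x y /same_P; exact: Pall_decreasing.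
  apply: Pall_congr => w.
  rewrite (assigns_best_alpha HR'' (rho_assigns_best su')).
  by apply: (assigns_best_alpha (Rstar_assigns_best HR HS) HR w).
Qed.
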